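(* Let $f\in A[X]$ be monic with discriminant $\Delta=\mathrm{Res}_X(f,f')\neq 0$, and let $r=v(\Delta)$. Then the number of roots of $f$ in $K$ is at most $q^{\lfloor r/2\rfloor+1}$.
   Context: $K$ is a field complete with respect to a non-archimedean discrete valuation $v$, normalized by $v(\pi)=1$ for a uniformizer $\pi$ of the valuation ring $A=\{x\in K: v(x)\geq 0\}$; the residue field $A/\pi A$ is finite with $q$ elements. *)

From HB Require Import structures.
From mathcomp Require Import all_boot all_order all_algebra.
Set Implicit Arguments. Unset Strict Implicit. Unset Printing Implicit Defensive.
Import Order.TTheory GRing.Theory Num.Theory.
Local Open Scope ring_scope.

(* A valuation v : K -> int, meaningful on nonzero elements (v 0 = +oo by convention).
   vge v x n  means  v(x) >= n  (true for x = 0). *)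
Definition vge (K : fieldType) (v : K -> int) (x : K) (n : int) : bool :=
  (x == 0) || (n <= v x).

Definition in_A (K : fieldType) (v : K -> int) (x : K) : bool := vge v x 0.

(* K is complete w.r.t. the normalized discrete valuation v, and the residue
   field A / pi A has exactly q elements. *)
Record complete_dvf_finite_residue (K : fieldType) (v : K -> int) (q : nat) : Prop := {
  v_mul : forall x y : K, x != 0 -> y != 0 -> v (x * y) = v x + v y;
  v_add : forall x y : K, x != 0 -> y != 0 -> x + y != 0 ->
            Num.min (v x) (v y) <= v (x + y);
  v_uniformizer : exists pi : K, pi != 0 /\ v pi = 1;
  v_complete : forall u : nat -> K,
      (forall N : int, exists M : nat, forall m n : nat,
          (M <= m)%N -> (M <= n)%N -> vge v (u m - u n) N) ->
      exists l : K, forall N : int, exists M : nat, forall n : nat,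
          (M <= n)%N -> vge v (u n - l) N;
  v_residue : exists s : seq K,
      [/\ size s = q,
          all (in_A v) s,
          (forall i j : nat, (i < q)%N -> (j < q)%N -> vge v (s`_i - s`_j) 1 -> i = j)
        & (forall x : K, in_A v x -> exists2 i : nat, (i < q)%N & vge v (x - s`_i) 1)]
}.

From HB Require Import structures.
From mathcomp Require Import all_boot all_order all_algebra.
From mathcomp Require Import zify ring.
Import Order.TTheory GRing.Theory Num.Theory.
Local Open Scope ring_scope.
Set Implicit Arguments. Unset Strict Implicit. Unset Printing Implicit Defensive.

(* Roots of a monic polynomial over A lie in A. If f had more than q^(t+1)
   roots, t = floor(r/2), then, sorting roots into residue classes modulo pi and
   iterating on (x - rep)/pi, two distinct roots a, b would satisfy
   v(a - b) >= t + 1. Writing f = (X - a)(X - b)h, the identity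
   Res((X - a)p, g) = +-g(a) Res(p, g), obtained by row and column operations on
   the Sylvester matrix and a Laplace expansion, gives
   Res(f, f') = -(a - b)^2 h(a) h(b) Res(h, f') with integral last factors,
   hence r >= 2(t + 1) > r. *)

Section ResultantMulXsubC.

Variable R : comNzRingType.
Implicit Types (p q : {poly R}) (a : R).

Definition coef_mx d (g : nat -> {poly R}) : 'M[R]_d := \matrix_(i, j) (g i)`_j.

Definition sylv_mx d m p q : 'M[R]_d :=
  coef_mx d (fun i => if (i < m)%N then 'X^i * p else 'X^(i - m) * q).

Lemma resultantE p q :
  resultant p q = \det (sylv_mx ((size q).-1 + (size p).-1) (size q).-1 p q).
Proof.
congr (\det _); apply/matrixP => i j; rewrite Sylvester_mxE !mxE.
by case: splitP => k -> /=; rewrite coefXnM ?addKn ltnNge; case: leqP.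
Qed.

Lemma sum_mul_natr_eq d (F : nat -> R) c :
  \sum_(l < d) F l * ((l : nat) == c)%:R = if (c < d)%N then F c else 0.
Proof.
under eq_bigr do rewrite mulr_natr mulrb.
by rewrite -big_mkcond big_ord1_eq.
Qed.

(* Column operation C_j <- C_j - a C_(j+1): it maps the coefficient row of w to
   that of (X - a) w shifted down one degree. *)
Definition col_shift_mx d a : 'M[R]_d :=
  \matrix_(l, k) (((l : nat) == k)%:R - a * ((l : nat) == k.+1)%:R).

(* Row operation R_r <- R_r - a R_(r-1), for the rows r > m. *)
Definition row_shift_mx d m a : 'M[R]_d :=
  \matrix_(r, s) (((r : nat) == s)%:R - (a *+ (m < r)%N) * ((s : nat) == r.-1)%:R).

Lemma coef_mx_col_shift d a (g : nat -> {poly R}) :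
  (forall i : 'I_d, (size (g i) <= d)%N) ->
  coef_mx d g *m col_shift_mx d a = \matrix_(i, j) ((g i)`_j - a * (g i)`_j.+1).
Proof.
move=> size_g; apply/matrixP => i j; rewrite !mxE.
under eq_bigr do rewrite !mxE mulrBr mulrCA.
rewrite sumrB -mulr_sumr !sum_mul_natr_eq ltn_ord; congr (_ - a * _).
by case: ltnP => // le_dj; rewrite nth_default // (leq_trans (size_g i)).
Qed.

Lemma row_shift_coef_mx d m a (g : nat -> {poly R}) :
  row_shift_mx d m a *m coef_mx d g =
  \matrix_(r, j) ((g r)`_j - (a *+ (m < r)%N) * (g r.-1)`_j).
Proof.
apply/matrixP => r j; rewrite !mxE.
under eq_bigr do rewrite !mxE mulrBl mulrC.
rewrite sumrB; under [X in X - _]eq_bigr do rewrite eq_sym.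
under [X in _ - X]eq_bigr do rewrite mulrAC -mulrA.
rewrite -mulr_sumr !(sum_mul_natr_eq _ (fun l => (g l)`_j)) ltn_ord.
by rewrite (leq_ltn_trans (leq_pred r) (ltn_ord r)).
Qed.

Lemma det_col_shift d a : \det (col_shift_mx d a) = 1.
Proof.
rewrite det_trig; last first.
  apply/forallP => i; apply/forallP => j; apply/implyP => lt_ij; rewrite mxE.
  by rewrite (ltn_eqF lt_ij) (@ltn_eqF i j.+1 (ltnW lt_ij)) mulr0 subr0.
by rewrite big1 // => i _; rewrite mxE eqxx (ltn_eqF (ltnSn i)) mulr0 subr0.
Qed.

Lemma det_row_shift d m a : \det (row_shift_mx d m a) = 1.
Proof.
rewrite det_trig; last first.
  apply/forallP => i; apply/forallP => j; apply/implyP => lt_ij; rewrite mxE.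
  by rewrite (ltn_eqF lt_ij) (gtn_eqF (leq_ltn_trans (leq_pred i) lt_ij)) mulr0 subr0.
rewrite big1 // => -[[|i] lti] _; rewrite mxE eqxx /=; first by rewrite mulr0n mul0r subr0.
by rewrite (gtn_eqF (ltnSn i)) mulr0 subr0.
Qed.

Section SylvesterMulXsubC.

Variables (m n : nat) (p q Q : {poly R}) (a : R).
Hypotheses (size_p : (size p <= n.+1)%N) (size_q : (size q <= m.+1)%N).
Hypothesis factor_q : q - q.[a]%:P = Q * ('X - a%:P).

Let d := (m + n).+1.

(* The rows of the row-reduced Sylvester matrix of (X - a) p and q, undone by
   col_shift_mx; the remainder q.[a] of q modulo X - a is the only nonzero
   entry of column 0. *)
Let h r : {poly R} :=
  if (r < m)%N then 'X^(r.+1) * p else if r == m then q.[a]%:P + 'X * Q else 'X^(r - m) * q.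

Let size_Q : (size Q <= m)%N.
Proof.
have [->|nzQ] := eqVneq Q 0; first by rewrite size_poly0.
have : (size (Q * ('X - a%:P))%R <= m.+1)%N.
  rewrite -factor_q (leq_trans (size_polyD _ _)) // geq_max size_q size_polyN.
  by rewrite size_polyC (leq_trans (leq_b1 _)).
by rewrite size_Mmonic ?monicXsubC // size_XsubC addn2.
Qed.

Let size_h (i : 'I_d) : (size (h i) <= d)%N.
Proof.
have size_XnM k (r : {poly R}) : (size ('X^k * r)%R <= k + size r)%N.
  by rewrite (leq_trans (size_polyMleq _ _)) // size_polyXn.
rewrite /h; case: ltnP => [lt_im|le_mi]; first by rewrite (leq_trans (size_XnM _ _)); lia.
case: eqP => [_|/eqP ne_im].
  by rewrite (leq_trans (size_polyD _ _)) // geq_max size_polyC (leq_trans (leq_b1 _)) //=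
       (leq_trans (size_polyMleq _ _)) // size_polyX ltnS (leq_trans size_Q) ?leq_addr.
by rewrite (leq_trans (size_XnM _ _)) //; have := ltn_ord i; lia.
Qed.

Let row_shift_sylv :
  row_shift_mx d m a *m sylv_mx d m (('X - a%:P) * p) q = coef_mx d h *m col_shift_mx d a.
Proof.
rewrite /sylv_mx row_shift_coef_mx coef_mx_col_shift //; apply/matrixP => r j.
rewrite !mxE /h; case: (ltngtP r m) => [lt_rm|lt_mr|->].
- by rewrite mulr0n mul0r subr0 exprS -mulrA (coefXM _ j.+1) mulrCA mulrBl coefB coefCM.
- have -> : (r.-1 < m)%N = false by lia.
  have -> : (r - m = (r.-1 - m).+1)%N by lia.
  by rewrite mulr1n exprS -mulrA (coefXM _ j.+1).
- have qE : q = q.[a]%:P + 'X * Q - a%:P * Q.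
    by rewrite -addrA -mulrBl (mulrC _ Q) -factor_q addrC subrK.
  rewrite subnn expr0 mul1r mulr0n mul0r subr0 {1}qE coefB !coefD coefCM !coefXM !coefC.
  by rewrite add0r.
Qed.

Let det_h : \det (coef_mx d h) = (-1) ^+ m * q.[a] * \det (sylv_mx (m + n) m p q).
Proof.
have lt_md : (m < d)%N by rewrite ltnS leq_addr.
rewrite (expand_det_col _ ord0) (bigD1 (Ordinal lt_md)) //= big1 ?addr0; last first.
  move=> i ne_im; rewrite mxE /h.
  have {}ne_im : (i : nat) != m by apply: contraNneq ne_im => eq_im; apply/eqP/val_inj.
  case: ltnP => [_|le_mi]; first by rewrite coefXnM mul0r.
  by rewrite (negbTE ne_im) coefXnM subn_gt0 ltn_neqAle eq_sym ne_im le_mi mul0r.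
rewrite mxE /h /= ltnn eqxx coefD coefC coefXM /= addr0 /cofactor /= addn0.
rewrite mulrCA mulrA; congr (_ * \det _); apply/matrixP => i j.
rewrite !mxE /= /bump leq0n add1n; case: (leqP m i) => le_mi.
  have -> : (i.+1 < m)%N = false by lia.
  have -> : (i.+1 == m) = false by lia.
  by rewrite add1n subSn // exprS -mulrA coefXM.
by rewrite add0n le_mi exprS -mulrA coefXM.
Qed.

Lemma det_sylv_mulXsubC :
  \det (sylv_mx d m (('X - a%:P) * p) q) = (-1) ^+ m * q.[a] * \det (sylv_mx (m + n) m p q).
Proof.
rewrite -det_h -[LHS]mul1r -(det_row_shift d m a) -det_mulmx row_shift_sylv.
by rewrite det_mulmx det_col_shift mulr1.
Qed.

End SylvesterMulXsubC.

Lemma resultant_mulXsubC p q a : p != 0 ->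
  resultant (('X - a%:P) * p) q = (-1) ^+ (size q).-1 * q.[a] * resultant p q.
Proof.
move=> nz_p; have /factor_theorem [Q factor_q] : root (q - q.[a]%:P) a.
  by rewrite /root !hornerE subrr.
have size_Xp : (size (('X - a%:P) * p)).-1 = (size p).-1.+1.
  by rewrite mulrC size_Mmonic ?monicXsubC // size_XsubC addn2 prednK ?size_poly_gt0.
by rewrite !resultantE size_Xp addnS (det_sylv_mulXsubC (leqSpred _) (leqSpred _) factor_q).
Qed.

End ResultantMulXsubC.

Lemma horner_deriv_XsubCM (R : comNzRingType) (a : R) (w : {poly R}) :
  (('X - a%:P) * w)^`().[a] = w.[a].
Proof. by rewrite derivM derivXsubC mul1r !hornerE subrr mul0r addr0. Qed.

Lemma resultant_deriv_mulXsubC2 (R : comNzRingType) (a b : R) (h f : {poly R}) :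
  h != 0 -> f = ('X - a%:P) * (('X - b%:P) * h) ->
  resultant f f^`() = - (a - b) ^+ 2 * (h.[a] * h.[b] * resultant h f^`()).
Proof.
move=> nz_h fE; have nz_bh : ('X - b%:P) * h != 0.
  by rewrite -size_poly_eq0 mulrC size_Mmonic ?monicXsubC // size_XsubC addn2.
have f'a : f^`().[a] = (a - b) * h.[a].
  by rewrite fE horner_deriv_XsubCM hornerM hornerXsubC.
have f'b : f^`().[b] = - (a - b) * h.[b].
  by rewrite fE mulrCA horner_deriv_XsubCM hornerM hornerXsubC opprB.
rewrite {1}fE !resultant_mulXsubC // f'a f'b; set s := (-1) ^+ _.
have s2 : s * s = 1 by rewrite -expr2 -exprM mulnC exprM sqrrN !expr1n.
by rewrite -[RHS]mul1r -s2; ring.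
Qed.

Lemma rpred_resultant (R : comNzRingType) (S : subringClosed R) (p r : {poly R}) :
  p \is a polyOver S -> r \is a polyOver S -> resultant p r \in S.
Proof.
move=> /polyOverP Sp /polyOverP Sr; apply: rpred_sum => sigma _.
rewrite rpredM ?rpredX ?rpredN1 // rpred_prod // => i _.
by rewrite Sylvester_mxE; case: split => k; apply: rpredMn.
Qed.

Lemma polyOver_divXsubC (R : nzRingType) (S : subringClosed R) (f g : {poly R}) (a : R) :
  f \is a polyOver S -> a \in S -> f = g * ('X - a%:P) -> g \is a polyOver S.
Proof.
move=> /polyOverP Sf Sa fE; apply/polyOverP.
have g_rec k : g`_k = f`_k.+1 + g`_k.+1 * a.
  by rewrite fE mulrBr coefB coefMX coefMC /= subrK.
suff Sg d k : (size g <= k + d)%N -> g`_k \in S.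
  by move=> k; apply: (Sg (size g)); rewrite leq_addl.
elim: d k => [|d IHd] k le_gk; first by rewrite nth_default ?rpred0 // -(addn0 k).
by rewrite g_rec rpredD ?rpredM ?IHd // addSnnS.
Qed.

Lemma sum_count_fibers (T : Type) (c : T -> nat) (n : nat) (s : seq T) :
  all (fun x => c x < n)%N s -> (\sum_(i < n) count (fun x => c x == i) s)%N = size s.
Proof.
elim: s => [|x s IHs] /=; first by rewrite big1.
move=> /andP[lt_xn lt_sn]; rewrite big_split /= IHs //.
rewrite (eq_bigr (fun i : 'I_n => if (i : nat) == c x then 1 else 0)%N); last first.
  by move=> i _; rewrite eq_sym; case: eqP.
by rewrite -big_mkcond (big_ord1_eq _ (fun=> 1%N)) lt_xn add1n.
Qed.

Lemma pigeonhole_fiber (T : Type) (c : T -> nat) (n N : nat) (s : seq T) :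
  all (fun x => c x < n)%N s -> (n * N < size s)%N ->
  exists i : 'I_n, (N < count (fun x => c x == i) s)%N.
Proof.
move=> lt_cn; rewrite -(sum_count_fibers lt_cn) => lt_nN_sum.
apply/existsP; apply: contraLR lt_nN_sum => /existsPn small_fibers.
rewrite -leqNgt -[in X in (_ <= X)%N](card_ord n) -sum_nat_const.
by apply: leq_sum => i _; rewrite leqNgt small_fibers.
Qed.

Section ValuationRing.

Variables (K : fieldType) (v : K -> int) (q : nat).
Hypothesis hK : complete_dvf_finite_residue v q.

Local Notation A := (in_A v).

Lemma valuation1 : v 1 = 0.
Proof.
have idem_0 (z : int) : z = z + z -> z = 0 by lia.
by apply: idem_0; have := v_mul hK (oner_neq0 K) (oner_neq0 K); rewrite mulr1.
Qed.

Lemma valuationV x : x != 0 -> v x^-1 = - v x.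
Proof.
move=> nz_x; have := v_mul hK nz_x (invr_neq0 nz_x).
by rewrite mulfV // valuation1 => vxV; apply/eqP; rewrite -addr_eq0 addrC -vxV.
Qed.

Lemma valuationN x : x != 0 -> v (- x) = v x.
Proof.
have nz_N1 : (-1 : K) != 0 by rewrite oppr_eq0 oner_neq0.
have vN1 : v (-1) = 0.
  have := v_mul hK nz_N1 nz_N1; rewrite mulrNN mulr1 valuation1.
  have opp_idem_0 (z : int) : 0 = z + z -> z = 0 by lia.
  exact: opp_idem_0.
by move=> nz_x; rewrite -mulN1r (v_mul hK nz_N1 nz_x) vN1 add0r.
Qed.

Lemma vgeN x N : vge v (- x) N = vge v x N.
Proof. by rewrite /vge oppr_eq0; have [//|nz_x] := eqVneq x 0; rewrite valuationN. Qed.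

Lemma vgeD x y N : vge v x N -> vge v y N -> vge v (x + y) N.
Proof.
have [->|nz_x] := eqVneq x 0; first by rewrite add0r.
have [->|nz_y] := eqVneq y 0; first by rewrite addr0.
rewrite /vge (negbTE nz_x) (negbTE nz_y); have [//|nz_xy /=] := eqVneq (x + y) 0.
by move=> le_Nx le_Ny; apply: le_trans (v_add hK nz_x nz_y nz_xy); rewrite le_min le_Nx.
Qed.

Lemma vgeM x y N M : vge v x N -> vge v y M -> vge v (x * y) (N + M).
Proof.
rewrite /vge mulf_eq0; have [//|nz_x] := eqVneq x 0; have [//|nz_y /=] := eqVneq y 0.
by rewrite (v_mul hK nz_x nz_y); apply: lerD.
Qed.

Lemma vgeW x N M : M <= N -> vge v x N -> vge v x M.
Proof. by rewrite /vge => le_MN /orP[->//|/(le_trans le_MN)->]; rewrite orbT. Qed.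

Lemma vge_sum (I : Type) (r : seq I) (P : pred I) (F : I -> K) N :
  (forall i, P i -> vge v (F i) N) -> vge v (\sum_(i <- r | P i) F i) N.
Proof.
move=> vF; apply: (big_ind (fun x => vge v x N)) => // [|x y]; first by rewrite /vge eqxx.
exact: vgeD.
Qed.

Fact in_A_subring_closed : subring_closed A.
Proof.
split=> [|x y|x y]; rewrite -!topredE /= /in_A.
- by rewrite /vge valuation1 lexx orbT.
- by move=> Ax Ay; apply: vgeD; rewrite ?vgeN.
- by move=> Ax Ay; have := vgeM Ax Ay.
Qed.

HB.instance Definition _ := GRing.isSubringClosed.Build K A in_A_subring_closed.

Lemma monic_root_in_A (f : {poly K}) x :
  (forall i, f`_i \in A) -> f \is monic -> root f x -> x \in A.
Proof.
move=> fA mon_f root_x; apply: contraT => notAx.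
have nz_x : x != 0 by apply: contraNneq notAx => ->; apply: rpred0.
set y := x^-1; have vy : vge v y 1.
  move: notAx; rewrite -topredE /= /in_A /vge /y invr_eq0 (negbTE nz_x) valuationV //=.
  lia.
have Ay : y \in A by apply: vgeW vy.
set d := (size f).-1.
have size_f : size f = d.+1 by rewrite prednK // size_poly_gt0 monic_neq0.
have lead_f : f`_d = 1 by apply/monicP.
have sum_eq : \sum_(i < d) f`_i * y ^+ (d - i) = -1.
  apply/eqP; rewrite -addr_eq0; apply/eqP.
  transitivity (f.[x] * y ^+ d); last by rewrite (rootP root_x) mul0r.
  rewrite horner_coef size_f big_ord_recr /= lead_f mul1r mulrDl mulr_suml.
  rewrite -exprMn mulfV // expr1n; congr (_ + _); apply: eq_bigr => i _.
  have xy_i : x ^+ i * y ^+ i = 1 by rewrite -exprMn mulfV // expr1n.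
  rewrite -[in y ^+ d](subnK (ltnW (ltn_ord i))) exprD.
  by rewrite -[LHS]mulr1 -xy_i; ring.
have : vge v (\sum_(i < d) f`_i * y ^+ (d - i)) 1.
  apply: vge_sum => i _; have lt_0di : (0 < d - i)%N by rewrite subn_gt0.
  rewrite -(prednK lt_0di) exprS.
  have Ayk : y ^+ (d - i).-1 \in A by apply: rpredX.
  by have := vgeM (fA i) (vgeM vy Ayk); rewrite add0r addr0.
by rewrite sum_eq vgeN /vge oner_eq0 valuation1.
Qed.

Lemma residue_index : exists (r : seq K) (c : K -> nat),
  forall x, x \in A -> (c x < q)%N /\ vge v (x - r`_(c x)) 1.
Proof.
have [r [_ _ _ r_repr]] := v_residue hK.
exists r, (fun x => find (fun i => vge v (x - r`_i) 1) (iota 0 q)) => x Ax.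
have [i lt_iq x_near_i] := r_repr x Ax.
have has_i : has (fun i => vge v (x - r`_i) 1) (iota 0 q).
  by apply/hasP; exists i; rewrite ?mem_iota.
have lt_find : (find (fun i => vge v (x - r`_i) 1) (iota 0 q) < q)%N.
  by rewrite -[X in (_ < X)%N](size_iota 0) -has_find.
by split=> //; have := nth_find 0%N has_i; rewrite nth_iota.
Qed.

Lemma pigeonhole_congruent (t : nat) (s : seq K) : uniq s -> {subset s <= A} ->
  (q ^ t < size s)%N -> exists x y, [/\ x \in s, y \in s, x != y & vge v (x - y) t%:Z].
Proof.
have [r [c c_repr]] := residue_index.
have [pi [nz_pi v_pi]] := v_uniformizer hK.
elim: t s => [|t IHt] s uniq_s sA.
  case: s uniq_s sA => [|x [|y s]] //= /andP[x_notin _] sA _.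
  exists x, y; split; rewrite ?inE ?eqxx ?orbT //.
    by apply: contraNneq x_notin => ->; rewrite inE eqxx.
  suff : x - y \in A by []; by rewrite rpredB ?sA // !inE eqxx ?orbT.
rewrite expnS => lt_qqt_s.
have lt_cq : all (fun x => c x < q)%N s by apply/allP => x /sA /c_repr[].
have [i big_fiber] := pigeonhole_fiber lt_cq lt_qqt_s.
pose phi x := (x - r`_i) / pi.
have phi_inj : injective phi by move=> x y /(mulIf (invr_neq0 nz_pi)) /addIr.
pose si := [seq x <- s | c x == i].
have phi_si_A : {subset map phi si <= A}.
  move=> z /mapP[x]; rewrite mem_filter => /andP[/eqP cx_i s_x] ->.
  have [_] := c_repr x (sA x s_x); rewrite cx_i => x_near_i.
  have vpiV : vge v pi^-1 (-1).
    by rewrite /vge invr_eq0 (negbTE nz_pi) valuationV // v_pi lexx orbT.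
  by have := vgeM x_near_i vpiV; rewrite addrN.
have uniq_phi_si : uniq (map phi si) by rewrite map_inj_uniq ?filter_uniq.
have big_phi_si : (q ^ t < size (map phi si))%N by rewrite size_map size_filter.
have [_ [_ [/mapP[x si_x ->] /mapP[y si_y ->] neq_phi vphi]]] :=
  IHt _ uniq_phi_si phi_si_A big_phi_si.
move: si_x si_y; rewrite !mem_filter => /andP[_ s_x] /andP[_ s_y].
exists x, y; split=> //; first by apply: contraNneq neq_phi => ->.
have -> : x - y = (phi x - phi y) * pi by rewrite /phi -mulrBl mulfVK //; ring.
rewrite -addn1 PoszD; apply: vgeM vphi _.
by rewrite /vge v_pi lexx orbT.
Qed.

Lemma vge_resultant_deriv (f : {poly K}) a b N :
  f != 0 -> (forall i, f`_i \in A) -> a \in A -> b \in A -> a != b ->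
  root f a -> root f b -> vge v (a - b) N -> vge v (resultant f f^`()) (N + N).
Proof.
move=> nz_f /polyOverP fA Aa Ab neq_ab /factor_theorem[g fE] root_b vab.
have /factor_theorem[h gE] : root g b.
  by move: root_b; rewrite fE rootM root_XsubC eq_sym (negbTE neq_ab) orbF.
have hA : h \is a polyOver A := polyOver_divXsubC (polyOver_divXsubC fA Aa fE) Ab gE.
have nz_h : h != 0 by apply: contraNneq nz_f => h0; rewrite fE gE h0 !mul0r.
have fE' : f = ('X - a%:P) * (('X - b%:P) * h) by rewrite fE gE mulrC (mulrC h).
have cA : h.[a] * h.[b] * resultant h f^`() \in A.
  by rewrite !rpredM ?rpred_horner ?rpred_resultant ?polyOver_deriv.
rewrite (resultant_deriv_mulXsubC2 nz_h fE') mulNr vgeN.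
by have := vgeM vab (vgeM vab cA); rewrite addr0 mulrA -expr2.
Qed.

End ValuationRing.

Theorem corollary3p3 (K : fieldType) (v : K -> int) (q : nat)
  (hK : complete_dvf_finite_residue v q)
  (f : {poly K}) (hfA : forall i : nat, in_A v f`_i) (hmon : f \is monic)
  (hD : resultant f f^`() != 0)
  (s : seq K) (huniq : uniq s) (hroots : all (root f) s) :
  (size s <= q ^ (`|v (resultant f f^`())|%N./2).+1)%N.
Proof.
have fA : forall i, f`_i \in in_A v := hfA.
have sA : {subset s <= in_A v}.
  by move=> x /(allP hroots) root_x; exact: (monic_root_in_A hK fA hmon root_x).
rewrite leqNgt; apply/negP => /(pigeonhole_congruent hK huniq sA).
move=> [a [b [s_a s_b neq_ab vab]]].
have := vge_resultant_deriv hK (monic_neq0 hmon) fA (sA a s_a) (sA b s_b) neq_ab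
  (allP hroots a s_a) (allP hroots b s_b) vab.
rewrite /vge (negbTE hD) /=; set r := v _ => le_r.
have r_ge0 : 0 <= r by apply: le_trans le_r.
have := odd_double_half `|r|%N; have := leq_b1 (odd `|r|%N); move: le_r r_ge0.
lia.
Qed.
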